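(* There is a constant $K$ such that the following holds. Let $d\in\mathbb{N}$ and $0\le r\le s\le N$ with $s-r\ge d$. Let $\mathcal{L}$ be the event that $pr$ is a renewal point and the restriction of the partition to $\{0,\ldots,pr-1\}$ coincides with some given partition of this set. Let $\mathcal{R}$ be the event that $ps$ is a renewal point and the restriction of the partition to $\{ps,\ldots,pN-1\}$ coincides with some given partition of this set. Then $$\bigl|\mathbb{P}_N(\mathcal{L}\cap\mathcal{R})-\mathbb{P}_N(\mathcal{L})\mathbb{P}_N(\mathcal{R})\bigr|\le K\,\mathbb{P}_N(\mathcal{L})\,\mathbb{P}_N(\mathcal{R})\sup_{k\ge d}|u_k-\mu^{-1}| .$$
   Context: Setting. Let $R,\ell>0$, $p\in\mathbb{N}$ and $\gamma=\ell/R$. $\mathcal{Z}=\mathbb{R}\times[0,2\pi R]$. Laughlin's function. $$\Psi_N=\kappa_N\prod_{j<k}\bigl(e^{z_k/R}-e^{z_j/R}\bigr)^p e^{-\sum x_k^2/(2\ell^2)},$$ with $$\kappa_N=(N!)^{-1/2}(2\pi R\ell\sqrt\pi)^{-N/2}\exp\Bigl(-\tfrac12p^2\gamma^2\sum_{j=1}^N(j-1)^2\Bigr),$$ and $C_N=\|\Psi_N\|^2_{L^2(\mathcal{Z}^N)}$. Orbitals and coefficients. $\psi_k(z)\propto e^{kz/R}e^{-x^2/(2\ell^2)}$ are orthonormal, and $$\Psi_N=(N!)^{-1/2}\sum_{\mathbf m}a_N(\mathbf m)\prod_i\psi_{m_i}(z_i).$$ Renewal points of tuples. A number $pk$ with $0\le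 k\le N$ is a renewal point of $\mathbf m$ if the $k$ smallest entries sum to $pk(k-1)/2$. Renewal weights. $\alpha_n=\frac1{n!}\sum|a_n(\mathbf m)|^2$, summed over $\mathbf m\in\{0,\ldots,pn-p\}^n$ whose only renewal points are $0$ and $pn$. $r=\exp(-\lim_N\frac1N\ln C_N)$, $p_n=\alpha_nr^n$, and $u_N=C_Nr^N$. It is known that: - $u_N=\sum_{n_1+\cdots+n_D=N}p_{n_1}\cdots p_{n_D}$; - $\sum p_n=1$; - $\mu=\sum np_n<\infty$; - $u_N\to\mu^{-1}$. Partitions. $\mathcal{P}_N$ is the set of partitions of $\{0,\ldots,pN-1\}$ into rods $\{pj,\ldots,pj+pn-1\}$ with $n\ge1$. Its renewal points are the left endpoints of the rods together with $pN$. The probability $\mathbb{P}_N$ of a partition with rod lengths $pn_1,\ldots,pn_D$ is $p_{n_1}\cdots p_{n_D}/u_N$. *)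

From HB Require Import structures.
From mathcomp Require Import all_boot all_order all_algebra.
From mathcomp Require mpoly.

Module LaughlinPoly.
Import mpoly.
Local Open Scope ring_scope.
Definition laughlin_poly (p N : nat) : {mpoly int[N]} :=
  \prod_(k < N) \prod_(j < N | (j < k)%N) ('X_k - 'X_j) ^+ p.
Definition lcoef (p N : nat) (m : N.-tuple nat) : int :=
  (laughlin_poly p N)@_[multinom m].
End LaughlinPoly.

From mathcomp Require Import all_classical all_reals all_analysis.
Set Implicit Arguments. Unset Strict Implicit. Unset Printing Implicit Defensive.
Import Order.TTheory GRing.Theory Num.Theory.
Import numFieldNormedType.Exports.
Local Open Scope ring_scope.

Section Laughlin.
Variables (R : realType) (p : nat) (gam : R).

(* a_N(m): coefficient of  prod_i psi_{m_i}(z_i)  in  sqrt(N!) Psi_N.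
   With psi_k = c_k e^{kz/R} e^{-x^2/(2 l^2)},
   c_k = (2 pi R l sqrt pi)^{-1/2} exp(-k^2 gam^2/2), one gets
   a_N(m) = coef_m * exp(gam^2/2 * (sum_i m_i^2 - p^2 sum_{j=1}^N (j-1)^2)). *)
Definition aN (N : nat) (m : N.-tuple nat) : R :=
  (LaughlinPoly.lcoef p N m)%:~R *
  expR (gam ^+ 2 / 2 *
        ((\sum_(i < N) (tnth m i) ^ 2)%:R - (p ^ 2 * \sum_(j < N) j ^ 2)%:R)).

(* C_N = ||Psi_N||^2 = (1/N!) sum_m |a_N(m)|^2 (orthonormality of the
   product orbitals); all nonzero coefficients have m_i <= p(N-1). *)
Definition CN (N : nat) : R :=
  (N`!%:R)^-1 * \sum_(m : N.-tuple 'I_(p * (N - 1)).+1) aN (map_tuple val m) ^+ 2.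

(* pk is a renewal point of m : the k smallest entries sum to p k (k-1)/2 *)
Definition renewal_pt (m : seq nat) (k : nat) : bool :=
  sumn (take k (sort leq m)) == p * 'C(k, 2).

Definition alpha (n : nat) : R :=
  (n`!%:R)^-1 *
  \sum_(m : n.-tuple 'I_(p * n - p).+1 |
         [forall k : 'I_n.+1,
            renewal_pt (map val m) k == ((k == 0%N :> nat) || (k == n :> nat))])
     aN (map_tuple val m) ^+ 2.

Definition rr : R := expR (- limn (fun N : nat => (N%:R)^-1 * ln (CN N))).
Definition pp (n : nat) : R := alpha n * rr ^+ n.
Definition uu (N : nat) : R := CN N * rr ^+ N.
Definition mu : R := limn (fun M : nat => \sum_(1 <= n < M) n%:R * pp n).

End Laughlin.

Definition is_comp (N : nat) (ns : seq nat) : bool :=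
  all (fun n => 0 < n)%N ns && (sumn ns == N).

Fixpoint comps_fuel (f N : nat) : seq (seq nat) :=
  match f with
  | 0 => if N == 0%N then [:: [::]] else [::]
  | f'.+1 =>
      if N == 0%N then [:: [::]]
      else flatten [seq [seq n :: c | c <- comps_fuel f' (N - n)] | n <- iota 1 N]
  end.
Definition comps (N : nat) : seq (seq nat) := comps_fuel N N.

(* rods {pj, ..., pj+pn-1} of a partition given by its rod lengths
   (in units of p), starting at p*j *)
Fixpoint rods_from (p j : nat) (ns : seq nat) : seq (seq nat) :=
  match ns with
  | [::] => [::]
  | n :: ns' => iota (p * j) (p * n) :: rods_from p (j + n) ns'
  end.
Definition rods (p : nat) (ns : seq nat) := rods_from p 0 ns.

Definition renewal_points (p N : nat) (ns : seq nat) : seq nat :=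
  rcons [seq head 0%N rd | rd <- rods p ns] (p * N).

Definition eventL (p N r : nat) (lc : seq nat) (ns : seq nat) : bool :=
  (p * r \in renewal_points p N ns) &&
  ([seq rd <- rods p ns | all (fun x => x < p * r)%N rd] == rods p lc).

Definition eventR (p N s : nat) (rc : seq nat) (ns : seq nat) : bool :=
  (p * s \in renewal_points p N ns) &&
  ([seq rd <- rods p ns | all (fun x => p * s <= x)%N rd] == rods_from p s rc).

Definition PN (R : realType) (p : nat) (gam : R) (N : nat) (E : pred (seq nat)) : R :=
  \sum_(ns <- comps N | E ns) (\prod_(n <- ns) pp p gam n) / uu p gam N.

From HB Require Import structures.
From mathcomp Require Import all_boot all_order all_algebra.
From mathcomp Require Import all_classical all_reals all_analysis.
From mathcomp Require Import zify ring lra.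
From mathcomp Require mpoly.
Import Order.TTheory GRing.Theory Num.Theory.
Import numFieldNormedType.Exports.
Local Open Scope classical_set_scope.
Local Open Scope ring_scope.

(* On the event L /\ R the partition is the concatenation lc ++ m ++ rc of
   the two prescribed pieces with an arbitrary composition m of s - r, so the
   renewal formula for u gives
     P(L /\ R) = w(lc) w(rc) u_(s-r) / u_N,
     P(L) = w(lc) u_(N-r) / u_N,   P(R) = w(rc) u_s / u_N,
   where w is the product of the rod weights p_n.  The covariance is therefore
   w(lc) w(rc) (u_(s-r) u_N - u_(N-r) u_s) / u_N^2.  All four indices are at
   least d, so the bracket is at most 4 M sup_(k >= d) |u_k - 1/mu| when
   u <= M; and u_(N-r) u_s >= m^2 where m > 0 is a lower bound for u, which
   exists because u_k >= p_1^k > 0 and u_k -> 1/mu > 0. *)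

Lemma cat_injr (T : eqType) (s : seq T) : injective (cat s).
Proof. by move=> x y /eqP; rewrite eqseq_cat // eqxx => /eqP. Qed.

Lemma cat_injl (T : eqType) (s : seq T) : injective (cat^~ s).
Proof.
move=> x y Hxy; have size_xy : size x = size y.
  by move/(congr1 size)/eqP: Hxy; rewrite !size_cat eqn_add2r => /eqP.
by move/eqP: Hxy; rewrite eqseq_cat // eqxx andbT => /eqP.
Qed.

Lemma big_filter_reindex {T U : eqType} {V : nmodType} {s : seq T} {t : seq U}
    {P : pred T} {f : U -> T} (F : T -> V) :
  uniq s -> uniq t -> injective f -> [seq x <- s | P x] =i map f t ->
  \sum_(x <- s | P x) F x = \sum_(y <- t) F (f y).
Proof.
move=> s_uniq t_uniq f_inj st; rewrite -big_filter -(big_map f xpredT).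
by apply/perm_big/uniq_perm; rewrite ?filter_uniq ?map_inj_uniq.
Qed.

Section Compositions.
Local Open Scope nat_scope.

Lemma is_comp0 ns : is_comp 0 ns = (ns == [::]).
Proof. by case: ns => [|[|x] ns] //; rewrite /is_comp /= andbF. Qed.

Lemma is_comp_cat a b x y : is_comp a x -> is_comp b y -> is_comp (a + b) (x ++ y).
Proof.
rewrite /is_comp all_cat sumn_cat => /andP [H1 /eqP ->] /andP [H3 /eqP ->].
by rewrite H1 H3 eqxx.
Qed.

Lemma is_comp_catl a x y : is_comp a (x ++ y) -> is_comp (a - sumn x) y.
Proof.
rewrite /is_comp all_cat sumn_cat => /andP [/andP [_ Hy] /eqP <-].
by rewrite Hy addKn eqxx.
Qed.

Lemma is_comp_catr a x y : is_comp a (x ++ y) -> is_comp (a - sumn y) x.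
Proof.
rewrite /is_comp all_cat sumn_cat => /andP [/andP [Hx _] /eqP <-].
by rewrite Hx addnK eqxx.
Qed.

Lemma mem_comps_fuel f N ns : N <= f -> (ns \in comps_fuel f N) = is_comp N ns.
Proof.
elim: f N ns => [|f IH] N ns.
  by rewrite leqn0 => /eqP -> /=; rewrite inE is_comp0.
move=> HN /=; case: eqP => [->|/eqP N0]; first by rewrite inE is_comp0.
apply/idP/idP.
  case/allpairsPdep => n [c [+ + ->]]; rewrite mem_iota => /andP [n_gt0 n_le].
  rewrite IH => [/andP [c_pos /eqP c_sum]|]; last by lia.
  by rewrite /is_comp /= n_gt0 c_pos c_sum; apply/eqP; lia.
case: ns => [|x c]; first by rewrite /is_comp /= eq_sym (negbTE N0).
rewrite /is_comp /= => /andP [/andP [x_gt0 c_pos] /eqP c_sum].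
apply/allpairsPdep; exists x, c; split => //.
  by rewrite mem_iota x_gt0 /=; lia.
by rewrite IH /is_comp ?c_pos /=; [apply/eqP; lia|lia].
Qed.

Lemma mem_comps N ns : (ns \in comps N) = is_comp N ns.
Proof. exact: mem_comps_fuel. Qed.

Lemma comps_uniq N : uniq (comps N).
Proof.
rewrite /comps; elim: N {-1}N => [|f IH] N /=; first by case: eqP.
case: eqP => // _; apply: allpairs_uniq_dep => //; first exact: iota_uniq.
by move=> [n c] [n' c'] _ _ /= [-> ->].
Qed.

Lemma cat_prefix_sumn (a b a' b' : seq nat) : a ++ b = a' ++ b' ->
  all (fun n => 0 < n) a -> sumn a <= sumn a' -> exists m, a' = a ++ m.
Proof.
elim: a a' => [|x a IH] [|x' a'] /=.
- by exists [::].
- by exists (x' :: a').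
- by move=> _ /andP [x_gt0 _]; lia.
move=> [<- Hab] /andP [_ a_pos]; rewrite leq_add2l => Hs.
by have [m ->] := IH _ Hab a_pos Hs; exists m.
Qed.

End Compositions.

Section Rods.
Local Open Scope nat_scope.
Variable p : nat.
Hypothesis p_gt0 : 0 < p.

Local Definition rod_below r (rd : seq nat) := all (fun x => x < p * r) rd.
Local Definition rod_above s (rd : seq nat) := all (fun x => p * s <= x) rd.

Lemma rods_from_cat j a b :
  rods_from p j (a ++ b) = rods_from p j a ++ rods_from p (j + sumn a) b.
Proof. by elim: a j => [|x a IH] j /=; rewrite ?addn0 // IH addnA. Qed.

Lemma rods_from_inj j : injective (rods_from p j).
Proof.
move=> a b; elim: a j b => [|x a IH] j [|y b] //= [Hxy Hab].
have x_eq_y : x = y.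
  by move/(congr1 size)/eqP: Hxy; rewrite !size_iota eqn_pmul2l // => /eqP.
by subst y; rewrite (IH _ _ Hab).
Qed.

Lemma head_rod j n : 0 < n -> head 0 (iota (p * j) (p * n)) = p * j.
Proof. by move=> n_gt0; case: (p * n) (muln_gt0 p n) => //; rewrite p_gt0 n_gt0. Qed.

Lemma rods_from_below r j a : j + sumn a <= r -> all (rod_below r) (rods_from p j a).
Proof.
elim: a j => [|x a IH] j //= Hj; rewrite IH; last by lia.
rewrite andbT; apply/allP => y; rewrite mem_iota => /andP [_ Hy].
by apply: leq_trans Hy _; rewrite -mulnDr leq_pmul2l //; lia.
Qed.

Lemma rods_from_above s j b : s <= j -> all (rod_above s) (rods_from p j b).
Proof.
elim: b j => [|x b IH] j //= Hj; rewrite IH; last by lia.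
rewrite andbT; apply/allP => y; rewrite mem_iota => /andP [Hy _].
by apply: leq_trans Hy; rewrite leq_pmul2l.
Qed.

Lemma rods_from_not_below r j b : r <= j -> all (fun n => 0 < n) b ->
  ~~ has (rod_below r) (rods_from p j b).
Proof.
elim: b j => [|x b IH] j //= Hj /andP [x_gt0 b_pos].
rewrite negb_or IH ?andbT //; last by lia.
apply/negP => /allP /(_ (p * j)).
rewrite mem_iota leqnn -{1}[p * j]addn0 ltn_add2l muln_gt0 p_gt0 x_gt0 => /(_ isT).
by rewrite ltn_pmul2l //; lia.
Qed.

Lemma rods_from_not_above s j a : j + sumn a <= s -> all (fun n => 0 < n) a ->
  ~~ has (rod_above s) (rods_from p j a).
Proof.
elim: a j => [|x a IH] j //= Hj /andP [x_gt0 a_pos].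
rewrite negb_or IH ?andbT //; last by lia.
apply/negP => /allP /(_ (p * j)).
rewrite mem_iota leqnn -{1}[p * j]addn0 ltn_add2l muln_gt0 p_gt0 x_gt0 => /(_ isT).
by rewrite leq_pmul2l //; lia.
Qed.

Lemma filter_rods_below a b : all (fun n => 0 < n) b ->
  [seq rd <- rods p (a ++ b) | rod_below (sumn a) rd] = rods p a.
Proof.
move=> b_pos; rewrite /rods rods_from_cat filter_cat.
rewrite (all_filterP (@rods_from_below _ 0 a (leqnn _))).
have := @rods_from_not_below _ (0 + sumn a) b (leqnn _) b_pos.
by rewrite has_filter negbK => /eqP ->; rewrite cats0.
Qed.

Lemma filter_rods_above a b : all (fun n => 0 < n) a ->
  [seq rd <- rods p (a ++ b) | rod_above (sumn a) rd] = rods_from p (sumn a) b.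
Proof.
move=> a_pos; rewrite /rods rods_from_cat filter_cat.
have := @rods_from_not_above (sumn a) 0 a (leqnn _) a_pos.
rewrite has_filter negbK => /eqP ->.
by rewrite (all_filterP (@rods_from_above _ (0 + sumn a) b (leqnn _))).
Qed.

Lemma mem_rod_heads j ns k : all (fun n => 0 < n) ns ->
  p * (j + sumn (take k ns))
    \in rcons [seq head 0 rd | rd <- rods_from p j ns] (p * (j + sumn ns)).
Proof.
elim: ns j k => [|x ns IH] j [|k] /=; rewrite ?mem_seq1 ?eqxx //.
all: case/andP=> x_gt0 ns_pos.
  by rewrite inE head_rod ?addn0 ?eqxx.
by rewrite inE !addnA IH ?orbT.
Qed.

Lemma rod_headsP j ns y : all (fun n => 0 < n) ns ->
  y \in [seq head 0 rd | rd <- rods_from p j ns] ->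
  exists k, y = p * (j + sumn (take k ns)).
Proof.
elim: ns j => [|x ns IH] j //= /andP [x_gt0 ns_pos].
rewrite inE => /orP [/eqP ->|/(IH _ ns_pos) [k ->]].
  by exists 0; rewrite head_rod ?addn0.
by exists k.+1; rewrite addnA.
Qed.

Lemma renewal_pointsP N ns r : is_comp N ns ->
  p * r \in renewal_points p N ns -> exists k, r = sumn (take k ns).
Proof.
case/andP=> ns_pos /eqP ns_sum; rewrite /renewal_points mem_rcons inE.
case/orP=> [/eqP|/(@rod_headsP 0 _ _ ns_pos) [k]] /eqP; rewrite ?add0n eqn_pmul2l // => /eqP.
  by exists (size ns); rewrite take_size ns_sum.
by exists k.
Qed.

Lemma sumn_renewal_points N a b : is_comp N (a ++ b) ->
  p * sumn a \in renewal_points p N (a ++ b).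
Proof.
case/andP=> ab_pos /eqP ab_sum; have := @mem_rod_heads 0 _ (size a) ab_pos.
by rewrite take_size_cat // ab_sum.
Qed.

Lemma eventL_cat N lc x : is_comp N (lc ++ x) -> eventL p N (sumn lc) lc (lc ++ x).
Proof.
move=> Hc; rewrite /eventL sumn_renewal_points //=.
by case/andP: Hc; rewrite all_cat => /andP [_ /filter_rods_below ->].
Qed.

Lemma eventR_cat N y rc : is_comp N (y ++ rc) -> eventR p N (sumn y) rc (y ++ rc).
Proof.
move=> Hc; rewrite /eventR sumn_renewal_points //=.
by case/andP: Hc; rewrite all_cat => /andP [/filter_rods_above -> _].
Qed.

Lemma eventLP N r lc ns : is_comp N ns -> eventL p N r lc ns ->
  exists x, ns = lc ++ x.
Proof.
move=> Hc /andP [/(@renewal_pointsP N ns _ Hc) [k ->] /eqP].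
case/andP: Hc; rewrite -[in all _ _](cat_take_drop k ns) all_cat => /andP [_ drop_pos] _.
rewrite -[in rods p ns](cat_take_drop k ns) filter_rods_below // => /rods_from_inj <-.
by exists (drop k ns); rewrite cat_take_drop.
Qed.

Lemma eventRP N s rc ns : is_comp N ns -> eventR p N s rc ns ->
  exists2 y, ns = y ++ rc & sumn y = s.
Proof.
move=> Hc /andP [/(@renewal_pointsP N ns _ Hc) [k ->] /eqP].
case/andP: Hc; rewrite -[in all _ _](cat_take_drop k ns) all_cat => /andP [take_pos _] _.
rewrite -[in rods p ns](cat_take_drop k ns) filter_rods_above // => /rods_from_inj <-.
by exists (take k ns); rewrite ?cat_take_drop.
Qed.

Lemma comps_eventL N r lc : r <= N -> is_comp r lc ->
  [seq ns <- comps N | eventL p N r lc ns] =i [seq lc ++ x | x <- comps (N - r)].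
Proof.
move=> HrN Hlc ns; have lc_sum : sumn lc = r by case/andP: Hlc => _ /eqP.
rewrite mem_filter mem_comps; apply/andP/mapP => [[HL Hc]|[x]].
  have [x Hx] := @eventLP N r lc ns Hc HL.
  by exists x; rewrite // mem_comps -lc_sum; apply: is_comp_catl; rewrite -Hx.
rewrite mem_comps => Hx ->; have Hc : is_comp N (lc ++ x).
  by rewrite -(subnKC HrN) is_comp_cat.
by rewrite Hc -{1}lc_sum eventL_cat.
Qed.

Lemma comps_eventR N s rc : s <= N -> is_comp (N - s) rc ->
  [seq ns <- comps N | eventR p N s rc ns] =i [seq y ++ rc | y <- comps s].
Proof.
move=> HsN Hrc ns; have rc_sum : sumn rc = N - s by case/andP: Hrc => _ /eqP.
rewrite mem_filter mem_comps; apply/andP/mapP => [[HR Hc]|[y]].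
  have [y Hy y_sum] := @eventRP N s rc ns Hc HR.
  exists y; rewrite // mem_comps.
  by have := @is_comp_catr N y rc; rewrite -Hy rc_sum subKn // => /(_ Hc).
rewrite mem_comps => Hy ->; have Hc : is_comp N (y ++ rc).
  by rewrite -(subnKC HsN) is_comp_cat.
by rewrite Hc; case/andP: Hy => _ /eqP {1}<-; rewrite eventR_cat.
Qed.

Lemma comps_eventLR N r s lc rc : r <= s <= N -> is_comp r lc -> is_comp (N - s) rc ->
  [seq ns <- comps N | eventL p N r lc ns && eventR p N s rc ns]
    =i [seq lc ++ (m ++ rc) | m <- comps (s - r)].
Proof.
move=> /andP [Hrs HsN] Hlc Hrc ns.
have lc_sum : sumn lc = r by case/andP: Hlc => _ /eqP.
have -> : ns \in [seq ns <- comps N | eventL p N r lc ns && eventR p N s rc ns]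
    = (ns \in [seq ns <- comps N | eventR p N s rc ns])
      && (ns \in [seq ns <- comps N | eventL p N r lc ns]).
  by rewrite !mem_filter; case: eventL; case: eventR; case: (_ \in _).
rewrite comps_eventL ?(leq_trans Hrs) // comps_eventR //.
apply/andP/mapP => [[/mapP [y Hy ->] /mapP [x _ Hx]]|[m Hm ->]].
  rewrite mem_comps in Hy; have [m y_eq] : exists m, y = lc ++ m.
    apply: (@cat_prefix_sumn lc x y rc (esym Hx)); first by case/andP: Hlc.
    by case/andP: Hy => _ /eqP ->; rewrite lc_sum.
  subst y; exists m; last by rewrite -catA.
  by rewrite mem_comps -lc_sum; apply: is_comp_catl.
rewrite mem_comps in Hm; split; apply/mapP.
- exists (lc ++ m); last by rewrite -catA.
  by rewrite mem_comps -(subnKC Hrs) is_comp_cat.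
- exists (m ++ rc) => //; rewrite mem_comps.
  have -> : N - r = (s - r) + (N - s) by lia.
  exact: is_comp_cat.
Qed.

End Rods.

Lemma cvgn_norm_bounded (R : realFieldType) (u : nat -> R) (c : R) :
  u @ \oo --> c -> exists M, forall k, `|u k| <= M.
Proof.
move=> u_c; have /ex_bound [|M uM] := cvg_seq_bounded (cvgP _ u_c).
  exact: (@globally_properfilter _ _ 0%N).
by exists M => k; apply: uM.
Qed.

(* The lower bound comes from the boundedness of the convergent sequence 1/u. *)
Lemma cvgn_pos_bounds (R : realFieldType) (u : nat -> R) (c : R) :
  (forall k, 0 < u k) -> c != 0 -> u @ \oo --> c ->
  exists m M, 0 < m /\ forall k, m <= u k <= M.
Proof.
move=> u_gt0 c_neq0 u_c.
have [M uM] := cvgn_norm_bounded _ _ _ u_c.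
have [M' uM'] := cvgn_norm_bounded _ _ _ (cvgV c_neq0 u_c).
have M'_gt0 : 0 < M'.
  by apply: lt_le_trans (uM' 0%N); rewrite normr_gt0 /= invr_neq0 // gt_eqF.
exists M'^-1, M; split => [|k]; first by rewrite invr_gt0.
apply/andP; split; last exact: le_trans (ler_norm _) (uM k).
have : (u k)^-1 <= M' by have := uM' k; rewrite ger0_norm // invr_ge0 ltW.
by rewrite invf_ple // posrE.
Qed.

Lemma le_sup_tail (R : realType) (u : nat -> R) (M : R) (d k : nat) :
  (forall k, `|u k| <= M) -> (d <= k)%N ->
  `|u k| <= sup [set `|u k| | k in [set k : nat | (d <= k)%N]].
Proof.
move=> uM dk; apply: ub_le_sup; last by exists k.
by exists M => _ [j _ <-].
Qed.

Lemma ler_norm_cross (R : realFieldType) (a b x y c S M : R) :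
  `|b| <= M -> `|y| <= M ->
  `|a - c| <= S -> `|b - c| <= S -> `|x - c| <= S -> `|y - c| <= S ->
  `|a * y - b * x| <= 4 * M * S.
Proof.
move=> bM yM ac bc xc yc.
have ab : `|a - b| <= 2 * S.
  rewrite (_ : a - b = (a - c) - (b - c)); last by ring.
  by apply: (le_trans (ler_normB _ _)); lra.
have yx : `|y - x| <= 2 * S.
  rewrite (_ : y - x = (y - c) - (x - c)); last by ring.
  by apply: (le_trans (ler_normB _ _)); lra.
rewrite (_ : a * y - b * x = (a - b) * y + b * (y - x)); last by ring.
apply: le_trans (ler_normD _ _) _; rewrite !normrM.
have S_ge0 : 0 <= S by apply: le_trans ac.
have := ler_pM (normr_ge0 _) (normr_ge0 _) ab yM.
have := ler_pM (normr_ge0 _) (normr_ge0 _) bM yx.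
lra.
Qed.

(* With [a = u_(s-r)], [b = u_(N-r)], [x = u_s], [y = u_N] and [A], [B] the
   weights of the two prescribed pieces, the left side is the covariance of L and R. *)
Lemma renewal_covariance_le (R : realFieldType) (A B a b x y c S m M : R) :
  0 <= A -> 0 <= B -> 0 < m -> m <= b <= M -> m <= x -> m <= y <= M ->
  `|a - c| <= S -> `|b - c| <= S -> `|x - c| <= S -> `|y - c| <= S ->
  `|A * B * a / y - (A * b / y) * (B * x / y)|
    <= 4 * M / m ^+ 2 * (A * b / y) * (B * x / y) * S.
Proof.
move=> A_ge0 B_ge0 m_gt0 /andP [mb bM] mx /andP [my yM] ac bc xc yc.
have y_gt0 : 0 < y by apply: lt_le_trans my.
have AB_ge0 : 0 <= A * B / y ^+ 2.
  by apply: divr_ge0; [exact: mulr_ge0|exact/exprn_ge0/ltW].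
have -> : A * B * a / y - (A * b / y) * (B * x / y) = A * B / y ^+ 2 * (a * y - b * x).
  by field; rewrite gt_eqF.
have -> : 4 * M / m ^+ 2 * (A * b / y) * (B * x / y) * S
    = A * B / y ^+ 2 * (4 * M * S * (b * x / m ^+ 2)).
  by field; rewrite !gt_eqF.
rewrite normrM ger0_norm // ler_wpM2l //.
have b_ge0 : 0 <= b by apply: le_trans mb; apply: ltW.
have y_ge0 : 0 <= y by apply: ltW.
have cross := @ler_norm_cross R a b x y c S M.
rewrite [`|b|]ger0_norm // [`|y|]ger0_norm // in cross.
apply: le_trans (cross bM yM ac bc xc yc) _.
have S_ge0 : 0 <= S by apply: le_trans ac.
have M_ge0 : 0 <= M by apply: le_trans bM.
rewrite ler_peMr ?mulr_ge0 // ler_pdivlMr ?exprn_gt0 //.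
by rewrite mul1r expr2 ler_pM // ltW.
Qed.

Lemma lcoef1 p (t : 1.-tuple nat) :
  tnth t ord0 = 0%N -> LaughlinPoly.lcoef p 1 t = 1.
Proof.
move=> t0; rewrite /LaughlinPoly.lcoef /LaughlinPoly.laughlin_poly big_ord1.
rewrite big_pred0; last by case.
have -> : mpoly.Multinom t = mpoly.mnm0.
  by apply/mpoly.mnmP => i; rewrite ord1 mpoly.mnm0E.
by rewrite mpoly.mcoeff1 eqxx.
Qed.

Section RodWeights.
Variables (R : realType) (p : nat) (gam : R).

Definition rod_weight (ns : seq nat) : R := \prod_(n <- ns) pp p gam n.

Lemma alpha_ge0 n : 0 <= alpha p gam n.
Proof.
rewrite /alpha mulr_ge0 ?invr_ge0 //.
by apply: sumr_ge0 => i _; exact: sqr_ge0.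
Qed.

(* The tuple (0) is admissible for n = 1, and a_1((0)) = 1. *)
Lemma alpha1_gt0 : 0 < alpha p gam 1.
Proof.
rewrite /alpha invr1 mul1r.
pose t0 : 1.-tuple 'I_(p * 1 - p).+1 := [tuple ord0].
have t0_renewal : [forall k : 'I_2, renewal_pt p (map val t0) k
                                   == ((k == 0%N :> nat) || (k == 1%N :> nat))].
  by apply/forallP => -[[|[|k]] k_lt] //=; rewrite /renewal_pt /= bin_small // mulr0.
have a1_gt0 : 0 < aN p gam (map_tuple val t0) ^+ 2.
  by rewrite exprn_gt0 // /aN lcoef1 ?tnth_map // mul1r expR_gt0.
rewrite (bigD1 t0) //=; apply: lt_le_trans a1_gt0 _; rewrite lerDl.
by apply: sumr_ge0 => i _; exact: sqr_ge0.
Qed.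

Lemma rr_gt0 : 0 < rr p gam.
Proof. exact: expR_gt0. Qed.

Lemma pp_ge0 n : 0 <= pp p gam n.
Proof. by rewrite /pp mulr_ge0 ?alpha_ge0 ?exprn_ge0 ?ltW ?rr_gt0. Qed.

Lemma pp1_gt0 : 0 < pp p gam 1.
Proof. by rewrite /pp expr1 mulr_gt0 ?alpha1_gt0 ?rr_gt0. Qed.

Lemma rod_weight_ge0 ns : 0 <= rod_weight ns.
Proof. by apply: prodr_ge0 => n _; exact: pp_ge0. Qed.

Lemma mu_ge_pp1 :
  cvgn (fun M : nat => \sum_(1 <= n < M) n%:R * pp p gam n) -> pp p gam 1 <= mu p gam.
Proof.
move=> mu_cvg; apply: limr_ge => //; apply: filterS (nbhs_infty_ge 2) => M M_ge2.
rewrite big_ltn //= mul1r lerDl.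
by apply: sumr_ge0 => n _; rewrite mulr_ge0 ?pp_ge0.
Qed.

Hypothesis uu_comps :
  forall N, uu p gam N = \sum_(ns <- comps N) rod_weight ns.

Lemma uu_ge_pp1X k : pp p gam 1 ^+ k <= uu p gam k.
Proof.
rewrite uu_comps (big_rem (nseq k 1%N)); last first.
  by rewrite mem_comps /is_comp all_nseq sumn_nseq mul1n eqxx orbT.
rewrite /rod_weight big_nseq iter_mulr_1 lerDl.
by apply: sumr_ge0 => ns _; exact: rod_weight_ge0.
Qed.

Lemma uu_gt0 k : 0 < uu p gam k.
Proof. exact: lt_le_trans (exprn_gt0 _ pp1_gt0) (uu_ge_pp1X k). Qed.

Hypothesis p_gt0 : (0 < p)%N.

Lemma PN_eventL N r lc : (r <= N)%N -> is_comp r lc ->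
  PN p gam N (eventL p N r lc) = rod_weight lc * uu p gam (N - r) / uu p gam N.
Proof.
move=> rN lc_comp; rewrite /PN -mulr_suml (uu_comps (N - r)) big_distrr; congr (_ * _).
rewrite (big_filter_reindex _ (comps_uniq N) (comps_uniq (N - r)) (@cat_injr _ lc)).
  by apply: eq_bigr => x _; rewrite /rod_weight big_cat.
exact: comps_eventL.
Qed.

Lemma PN_eventR N s rc : (s <= N)%N -> is_comp (N - s) rc ->
  PN p gam N (eventR p N s rc) = rod_weight rc * uu p gam s / uu p gam N.
Proof.
move=> sN rc_comp; rewrite /PN -mulr_suml (uu_comps s) big_distrr; congr (_ * _).
rewrite (big_filter_reindex _ (comps_uniq N) (comps_uniq s) (@cat_injl _ rc)).
  by apply: eq_bigr => y _; rewrite big_cat [RHS]mulrC.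
exact: comps_eventR.
Qed.

Lemma PN_eventLR N r s lc rc : (r <= s <= N)%N -> is_comp r lc -> is_comp (N - s) rc ->
  PN p gam N (fun ns => eventL p N r lc ns && eventR p N s rc ns)
    = rod_weight lc * rod_weight rc * uu p gam (s - r) / uu p gam N.
Proof.
move=> rsN lc_comp rc_comp.
rewrite /PN -mulr_suml (uu_comps (s - r)) big_distrr; congr (_ * _).
have f_inj : injective (fun m => lc ++ (m ++ rc)).
  by move=> x y /cat_injr /cat_injl.
rewrite (big_filter_reindex _ (comps_uniq N) (comps_uniq (s - r)) f_inj).
  by apply: eq_bigr => m _; rewrite /rod_weight !big_cat /=; ring.
exact: comps_eventLR.
Qed.

End RodWeights.

Theorem lemma5p8 (R : realType) (p : nat) (Rad ell : R) :
  (0 < p)%N -> 0 < Rad -> 0 < ell ->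
  let gam := ell / Rad in
  cvgn (fun N : nat => (N%:R)^-1 * ln (CN p gam N)) ->
  (forall N, uu p gam N = \sum_(ns <- comps N) \prod_(n <- ns) pp p gam n) ->
  (fun M : nat => \sum_(1 <= n < M) pp p gam n) @ \oo --> (1 : R) ->
  cvgn (fun M : nat => \sum_(1 <= n < M) n%:R * pp p gam n) ->
  uu p gam @ \oo --> (mu p gam)^-1 ->
  exists K : R, forall (d r s N : nat) (lc rc : seq nat),
    (r <= s <= N)%N -> (d <= s - r)%N ->
    is_comp r lc -> is_comp (N - s) rc ->
    `| PN p gam N (fun ns => eventL p N r lc ns && eventR p N s rc ns)
       - PN p gam N (eventL p N r lc) * PN p gam N (eventR p N s rc) |
    <= K * PN p gam N (eventL p N r lc) * PN p gam N (eventR p N s rc)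
         * sup [set `| uu p gam k - (mu p gam)^-1 | | k in [set k : nat | (d <= k)%N]].
Proof.
move=> p_gt0 _ _ gam _ uu_comps _ mu_cvg uu_cvg.
have mu_gt0 : 0 < mu p gam.
  exact: lt_le_trans (pp1_gt0 R p gam) (@mu_ge_pp1 R p gam mu_cvg).
have [m [M [m_gt0 uu_bounds]]] := cvgn_pos_bounds _ _ _
  (@uu_gt0 R p gam uu_comps) (invr_neq0 (lt0r_neq0 mu_gt0)) uu_cvg.
exists (4 * M / m ^+ 2) => d r s N lc rc rsN dsr lc_comp rc_comp.
have /andP [rs sN] := rsN.
rewrite PN_eventLR // PN_eventL ?(leq_trans rs) // PN_eventR //.
set S := sup _.
have uu_dist_le k : (d <= k)%N -> `|uu p gam k - (mu p gam)^-1| <= S.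
  apply: (@le_sup_tail R _ (M + (mu p gam)^-1)) => // j.
  apply: le_trans (ler_normB _ _) (lerD _ _).
    by rewrite ger0_norm ?(ltW (@uu_gt0 R p gam uu_comps j)) //; case/andP: (uu_bounds j).
  by rewrite ger0_norm // invr_ge0 ltW.
have uu_ge k : m <= uu p gam k by case/andP: (uu_bounds k).
apply: (@renewal_covariance_le R _ _ _ _ _ _ (mu p gam)^-1);
  by rewrite ?rod_weight_ge0 ?uu_bounds ?uu_ge ?uu_dist_le //; lia.
Qed.
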